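(* Let $n>1$ be a natural number which is either multiplicatively $e$-perfect (i.e. $T_e(n)=n^2$) or multiplicatively $e$-superperfect (i.e. $T_e(T_e(n))=n^2$). Then $n$ is $e$-harmonic of type $2$ if and only if $S_e(n)$ divides $d_e(n)$.
   Context: For $n=p_1^{a_1}\cdots p_r^{a_r}>1$ (prime factorization), a divisor $d=p_1^{b_1}\cdots p_r^{b_r}$ of $n$ is an exponential divisor ($e$-divisor) if $b_i\mid a_i$ for all $i$. $T_e(n)$ is the product of the $e$-divisors of $n$, $d_e(n)=d(a_1)\cdots d(a_r)$ is the number of $e$-divisors of $n$ (where $d(m)$ is the number of positive divisors of $m$), and $S_e(n)=\prod_{i=1}^r\left(\sum_{d_i\mid a_i}p_i^{a_i-d_i}\right)$. An integer $n$ is called $e$-harmonic of type $2$ if $S_e(n)\mid n\,d_e(n)$. *)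

From mathcomp Require Import all_boot.
Set Implicit Arguments. Unset Strict Implicit. Unset Printing Implicit Defensive.

(* d is an exponential divisor of n: d | n, d > 0, and for each prime p | n,
   the exponent b of p in d divides the exponent a of p in n.  Since a >= 1 and
   0 %| a is false, this forces b >= 1, i.e. d has the same prime support. *)
Definition is_edivisor (n d : nat) : bool :=
  (d %| n) && (0 < d) && all (fun p => logn p d %| logn p n) (primes n).

Definition edivisors (n : nat) : seq nat := [seq d <- divisors n | is_edivisor n d].

Definition Te (n : nat) : nat := \prod_(d <- edivisors n) d.

Definition ndiv (m : nat) : nat := size (divisors m).

Definition de (n : nat) : nat := \prod_(p <- primes n) ndiv (logn p n).

Definition Se (n : nat) : nat :=
  \prod_(p <- primes n) \sum_(d <- divisors (logn p n)) p ^ (logn p n - d).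

Definition e_harmonic2 (n : nat) : Prop := Se n %| n * de n.

Definition mult_e_perfect (n : nat) : Prop := Te n = n ^ 2.
Definition mult_e_superperfect (n : nat) : Prop := Te (Te n) = n ^ 2.

From mathcomp Require Import all_boot.
From mathcomp Require Import zify.
Set Implicit Arguments. Unset Strict Implicit.

(* Both hypotheses force n to be a prime power p^a.  Writing n = p^a m with
   p coprime to m, the e-divisors of n are the products of those of p^a
   (the p^b with b | a) and those of m, whence
   T_e(p^a m) = p^(sigma(a) k(m)) T_e(m)^(d(a)), k(m) the number of
   e-divisors of m.  Since T_e(m) >= m, comparing cofactors in T_e(n) = n^2
   (or T_e(T_e(n)) = n^2) bounds d(a) (resp. d(a) d(sigma(a) k(m))) by 2,
   and comparing p-exponents then rules out every cofactor m > 1.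
   For n = p^a, S_e(n) is a sum of powers of p whose only term not divisible
   by p is p^0 = 1, so S_e(n) is coprime to n and Gauss' lemma removes n
   from S_e(n) | n d_e(n). *)

Definition sigma (a : nat) : nat := \sum_(d <- divisors a) d.

Definition nedivisors (n : nat) : nat := size (edivisors n).

Lemma prodn_expl (I : Type) (r : seq I) (F : I -> nat) k :
  \prod_(i <- r) F i ^ k = (\prod_(i <- r) F i) ^ k.
Proof. by rewrite (big_morph (expn^~ k) (fun a b => expnMn a b k) (exp1n k)). Qed.

Lemma ndiv1 : ndiv 1 = 1. Proof. by []. Qed.

Lemma sigma1 : sigma 1 = 1. Proof. by rewrite /sigma big_seq1. Qed.

Lemma leq_sigma a : 0 < a -> a <= sigma a.
Proof.
move=> a0; rewrite /sigma (bigD1_seq a) ?divisors_uniq ?divisors_id //=.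
exact: leq_addr.
Qed.

Lemma ndiv_gt0 a : 0 < a -> 0 < ndiv a.
Proof. by move=> a0; rewrite /ndiv lt0n size_eq0; apply: contraTneq (divisors_id a0) => ->. Qed.

Lemma divisors_1_self_subset a : 0 < a -> {subset [:: 1; a] <= divisors a}.
Proof. by move=> a0 d; rewrite !inE => /orP[] /eqP ->; rewrite ?divisor1 ?divisors_id. Qed.

Lemma ndiv_eq1 a : 0 < a -> ndiv a = 1 -> a = 1.
Proof.
move=> a0 da1; apply/eqP/negPn/negP => a_neq1.
have uniq_1a : uniq [:: 1; a] by rewrite /= inE eq_sym a_neq1.
by have := uniq_leq_size uniq_1a (divisors_1_self_subset a0); rewrite -/(ndiv a) da1.
Qed.

Lemma sigma_ndiv2 b : 0 < b -> ndiv b = 2 -> sigma b = b.+1.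
Proof.
move=> b0 db2; have b_neq1 : b != 1 by apply: contra_eqN db2 => /eqP ->.
have uniq_1b : uniq [:: 1; b] by rewrite /= inE eq_sym b_neq1.
have [_ sub_divs] := uniq_min_size uniq_1b (divisors_1_self_subset b0) (eq_leq db2).
have divsE : perm_eq [:: 1; b] (divisors b).
  by apply: uniq_perm; rewrite ?divisors_uniq.
by rewrite /sigma -(perm_big _ divsE) big_cons big_seq1 /= add1n.
Qed.

Lemma mem_edivisors n d : 0 < n -> (d \in edivisors n) = is_edivisor n d.
Proof.
move=> n0; rewrite /edivisors mem_filter -dvdn_divisors //.
by case: (is_edivisor n d) / andP => // -[/andP[->]].
Qed.

Lemma edivisors_uniq n : uniq (edivisors n).
Proof. exact: filter_uniq (divisors_uniq n). Qed.

Lemma edivisors_id n : 0 < n -> n \in edivisors n.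
Proof. by move=> n0; rewrite mem_edivisors // /is_edivisor dvdnn n0; apply/allP. Qed.

Lemma edivisor_gt0 n d : d \in edivisors n -> 0 < d.
Proof. by rewrite mem_filter => /andP[/andP[/andP[_ ->]]]. Qed.

Lemma edivisor_dvd n d : d \in edivisors n -> d %| n.
Proof. by rewrite mem_filter => /andP[/andP[/andP[->]]]. Qed.

Lemma nedivisors_gt0 n : 0 < n -> 0 < nedivisors n.
Proof.
by move=> n0; rewrite /nedivisors lt0n size_eq0; apply: contraTneq (edivisors_id n0) => ->.
Qed.

Lemma Te_gt0 n : 0 < Te n.
Proof. by rewrite /Te big_seq prodn_cond_gt0 // => d /edivisor_gt0. Qed.

Lemma leq_Te n : 0 < n -> n <= Te n.
Proof.
move=> n0; apply: dvdn_leq (Te_gt0 n) _.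
by rewrite /Te (bigD1_seq n) ?edivisors_id ?edivisors_uniq //= dvdn_mulr.
Qed.

Lemma coprime_Te p m : coprime p m -> coprime p (Te m).
Proof.
move=> cpm; rewrite /Te big_seq; elim/big_ind: _ => [|x y|d /edivisor_dvd dm].
- exact: coprimen1.
- by rewrite coprimeMr => -> ->.
- exact: coprime_dvdr dm cpm.
Qed.

Section CoprimeFactors.

Variables x y : nat.
Hypotheses (cxy : coprime x y) (x_gt0 : 0 < x) (y_gt0 : 0 < y).

Lemma is_edivisorM d1 d2 :
  is_edivisor x d1 -> is_edivisor y d2 -> is_edivisor (x * y) (d1 * d2).
Proof.
move=> /andP[/andP[d1x d1_gt0] ex1] /andP[/andP[d2y d2_gt0] ex2].
rewrite /is_edivisor dvdn_mul // muln_gt0 d1_gt0 d2_gt0 /=.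
apply/allP => q; rewrite primesM // => /orP[qx | qy].
- have cqy : coprime q y.
    by apply: coprime_dvdl cxy; move: qx; rewrite mem_primes => /and3P[].
  rewrite !lognM // (logn_coprime cqy) (logn_coprime (coprime_dvdr d2y cqy)) !addn0.
  exact: (allP ex1).
- have cqx : coprime q x.
    move: qy; rewrite mem_primes => /and3P[_ _ qy].
    by apply: coprime_dvdl qy _; rewrite coprime_sym.
  rewrite !lognM // (logn_coprime cqx) (logn_coprime (coprime_dvdr d1x cqx)) !add0n.
  exact: (allP ex2).
Qed.

Lemma gcdn_splitM d : d %| x * y -> d = gcdn d x * gcdn d y.
Proof.
move=> dxy; apply/eqP; rewrite eqn_dvd; apply/andP; split.
- have d_dvd : d %| gcdn d x * y by rewrite muln_gcdl dvdn_gcd dxy dvdn_mulr.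
  by rewrite muln_gcdr dvdn_gcd dvdn_mull // mulnC.
- have cg : coprime (gcdn d x) (gcdn d y).
    exact: coprime_dvdl (dvdn_gcdr d x) (coprime_dvdr (dvdn_gcdr d y) cxy).
  by rewrite Gauss_dvd // !dvdn_gcdl.
Qed.

Lemma gcdn_pmulr u v : u %| x -> v %| y -> gcdn x (u * v) = u.
Proof.
by move=> ux vy; rewrite Gauss_gcdl ?(coprime_dvdr vy cxy) //; apply/gcdn_idPr.
Qed.

End CoprimeFactors.

Lemma is_edivisor_gcdl x y d : coprime x y -> 0 < x -> 0 < y ->
  is_edivisor (x * y) d -> is_edivisor x (gcdn d x).
Proof.
move=> cxy x0 y0 /andP[/andP[dxy d0] exd].
rewrite /is_edivisor dvdn_gcdr gcdn_gt0 x0 orbT /=.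
apply/allP => q qx; have cqy : coprime q y.
  by apply: coprime_dvdl cxy; move: qx; rewrite mem_primes => /and3P[].
have -> : logn q (gcdn d x) = logn q d.
  rewrite {2}(gcdn_splitM cxy dxy) lognM ?gcdn_gt0 ?x0 ?y0 ?orbT //.
  by rewrite (logn_coprime (coprime_dvdr (dvdn_gcdr d y) cqy)) addn0.
have -> : logn q x = logn q (x * y) by rewrite lognM // (logn_coprime cqy) addn0.
by apply: (allP exd); rewrite primesM // qx.
Qed.

Lemma edivisorsM x y : coprime x y -> 0 < x -> 0 < y ->
  perm_eq (edivisors (x * y)) [seq d1 * d2 | d1 <- edivisors x, d2 <- edivisors y].
Proof.
move=> cxy x0 y0; have cyx : coprime y x by rewrite coprime_sym.
apply: uniq_perm; first exact: edivisors_uniq.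
- apply: allpairs_uniq; rewrite ?edivisors_uniq //.
  move=> [u1 u2] [v1 v2] /allpairsP[[a1 a2] [/= ha1 ha2 [-> ->]]].
  move=> /allpairsP[[b1 b2] [/= hb1 hb2 [-> ->]]] /= eq_prod.
  rewrite -(gcdn_pmulr cxy (edivisor_dvd ha1) (edivisor_dvd ha2)) eq_prod.
  rewrite (gcdn_pmulr cxy (edivisor_dvd hb1) (edivisor_dvd hb2)).
  rewrite -(gcdn_pmulr cyx (edivisor_dvd ha2) (edivisor_dvd ha1)) mulnC eq_prod mulnC.
  by rewrite (gcdn_pmulr cyx (edivisor_dvd hb2) (edivisor_dvd hb1)).
- move=> d; rewrite mem_edivisors ?muln_gt0 ?x0 //; apply/idP/allpairsP => [ed | ].
  + exists (gcdn d x, gcdn d y); rewrite /= !mem_edivisors //; split.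
    * exact: is_edivisor_gcdl ed.
    * by apply: (is_edivisor_gcdl cyx) => //; rewrite mulnC.
    * by apply: (gcdn_splitM cxy); case/andP: ed => /andP[].
  + case=> [[d1 d2] [/= d1x d2y ->]].
    by apply: is_edivisorM; rewrite // -mem_edivisors.
Qed.

Lemma TeM x y : coprime x y -> 0 < x -> 0 < y ->
  Te (x * y) = Te x ^ nedivisors y * Te y ^ nedivisors x.
Proof.
move=> cxy x0 y0; rewrite /Te (perm_big _ (edivisorsM cxy x0 y0)) big_allpairs_dep /=.
under eq_bigr => d1 _ do rewrite big_split /= big_const_seq count_predT iter_muln_1.
by rewrite big_split /= prodn_expl big_const_seq count_predT iter_muln_1.
Qed.

Lemma edivisors_pfactor p a : prime p -> 0 < a ->
  perm_eq (edivisors (p ^ a)) [seq p ^ b | b <- divisors a].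
Proof.
move=> pp a0; have primesE : primes (p ^ a) = [:: p] by rewrite primesX // primes_prime.
apply: uniq_perm; rewrite ?edivisors_uniq ?(map_inj_uniq (expnI (prime_gt1 pp))) ?divisors_uniq //.
move=> d; rewrite mem_edivisors ?expn_gt0 ?prime_gt0 //; apply/idP/mapP.
- case/andP=> /andP[/(dvdn_pfactor _ _ pp) [b _ ->] _].
  rewrite primesE /= pfactorK // pfactorK // andbT => ba.
  by exists b; rewrite // -dvdn_divisors.
- case=> b; rewrite -dvdn_divisors // => ba ->.
  rewrite /is_edivisor dvdn_exp2l ?(dvdn_leq a0) // expn_gt0 prime_gt0 // primesE /=.
  by rewrite !pfactorK // andbT.
Qed.

Lemma Te_pfactor p a : prime p -> 0 < a -> Te (p ^ a) = p ^ sigma a.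
Proof. by move=> pp a0; rewrite /Te (perm_big _ (edivisors_pfactor pp a0)) big_map -expn_sum. Qed.

Lemma nedivisors_pfactor p a : prime p -> 0 < a -> nedivisors (p ^ a) = ndiv a.
Proof. by move=> pp a0; rewrite /nedivisors (perm_size (edivisors_pfactor pp a0)) size_map. Qed.

Lemma Te_pfactorM p a m : prime p -> 0 < a -> 0 < m -> coprime p m ->
  Te (p ^ a * m) = p ^ (sigma a * nedivisors m) * Te m ^ ndiv a.
Proof.
move=> pp a_gt0 m_gt0 cpm; have pa_gt0 : 0 < p ^ a by rewrite expn_gt0 prime_gt0.
rewrite (TeM (_ : coprime (p ^ a) m) pa_gt0 m_gt0) ?coprime_pexpl //.
by rewrite Te_pfactor // nedivisors_pfactor // -expnM.
Qed.

Lemma eq_pfactorM p e1 e2 x1 x2 : prime p -> coprime p x1 -> coprime p x2 ->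
  p ^ e1 * x1 = p ^ e2 * x2 -> e1 = e2 /\ x1 = x2.
Proof.
move=> pp cx1 cx2 eq12.
have x_gt0 x : coprime p x -> 0 < x.
  by case: x => //; rewrite /coprime gcdn0 => /eqP p1; move: (prime_gt1 pp); rewrite p1.
have lognE e x : coprime p x -> logn p (p ^ e * x) = e.
  move=> cx; have x0 := x_gt0 x cx.
  by rewrite lognM ?expn_gt0 ?(prime_gt0 pp) // pfactorK // logn_coprime // addn0.
have e12 : e1 = e2 by rewrite -(lognE e1 x1 cx1) eq12 lognE.
split=> //; apply/eqP; rewrite -(eqn_pmul2l (_ : 0 < p ^ e1)) ?expn_gt0 ?(prime_gt0 pp) //.
by rewrite eq12 e12.
Qed.

Definition prime_power (n : nat) : Prop := exists p a, [/\ prime p, 0 < a & n = p ^ a].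

Lemma prime_powerVcofactor n : 1 < n -> prime_power n \/
  exists p a m, [/\ prime p, 0 < a, 1 < m, coprime p m & n = p ^ a * m].
Proof.
move=> n1; have pp := pdiv_prime n1; have n0 : 0 < n by lia.
have [m cpm nE] := pfactor_coprime pp n0.
have a_gt0 : 0 < logn (pdiv n) n by rewrite logn_gt0 mem_primes pp n0 pdiv_dvd.
case: (ltngtP m 1) => [| m1 | m1].
- by rewrite ltnS leqn0 => /eqP m0; move: n0; rewrite nE m0.
- by right; exists (pdiv n), (logn (pdiv n) n), m; split; rewrite // mulnC.
- by left; exists (pdiv n), (logn (pdiv n) n); split; rewrite // {1}nE m1 mul1n.
Qed.

Lemma perfect_prime_power n : 1 < n -> mult_e_perfect n -> prime_power n.
Proof.
elim/ltn_ind: n => n IH n1; rewrite /mult_e_perfect.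
case: (prime_powerVcofactor n1) => [// | [p [a [m [pp a_gt0 m1 cpm nE]]]]].
have m_gt0 : 0 < m by lia.
have m_lt_n : m < n.
  by rewrite nE ltn_Pmull // (leq_trans (prime_gt1 pp)) ?(leq_pexp2l (prime_gt0 pp) a_gt0).
rewrite nE.
rewrite Te_pfactorM // expnMn -expnM => /esym eqTe.
have [eq_exp eq_cof] := eq_pfactorM pp (coprimeXr _ cpm) (coprimeXr _ (coprime_Te cpm)) eqTe.
have da_le2 : ndiv a <= 2.
  by rewrite -(leq_exp2l _ _ m1) eq_cof leq_exp2r ?ndiv_gt0 ?leq_Te.
have km_gt0 := nedivisors_gt0 m_gt0.
have [da1 | da2] : ndiv a = 1 \/ ndiv a = 2 by have := ndiv_gt0 a_gt0; lia.
- have a1 := ndiv_eq1 a_gt0 da1.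
  rewrite a1 sigma1 !mul1n in eq_exp; rewrite da1 expn1 in eq_cof.
  have [q [b [pq b_gt0 mE]]] : prime_power m.
    by apply: IH; rewrite // /mult_e_perfect -eq_cof.
  rewrite mE nedivisors_pfactor // in eq_exp.
  rewrite mE Te_pfactor // -expnM in eq_cof.
  have := sigma_ndiv2 b_gt0 (esym eq_exp); rewrite -(expnI (prime_gt1 pq) eq_cof) => b2.
  by move: eq_exp; rewrite (_ : b = 1) ?ndiv1 //; lia.
- rewrite (sigma_ndiv2 a_gt0 da2) in eq_exp.
  have a1 : a = 1 by case: (nedivisors m) km_gt0 eq_exp => [|[|k]] // _; [lia | nia].
  by move: da2; rewrite a1 ndiv1.
Qed.

Lemma superperfect_prime_power n : 1 < n -> mult_e_superperfect n -> prime_power n.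
Proof.
elim/ltn_ind: n => n IH n1; rewrite /mult_e_superperfect.
case: (prime_powerVcofactor n1) => [// | [p [a [m [pp a_gt0 m1 cpm nE]]]]].
have m_gt0 : 0 < m by lia.
have m_lt_n : m < n.
  by rewrite nE ltn_Pmull // (leq_trans (prime_gt1 pp)) ?(leq_pexp2l (prime_gt0 pp) a_gt0).
rewrite nE.
have km_gt0 := nedivisors_gt0 m_gt0.
set c := sigma a * nedivisors m; set m' := Te m ^ ndiv a.
have c_gt0 : 0 < c by rewrite muln_gt0 km_gt0 (leq_trans a_gt0) ?leq_sigma.
have cpm' : coprime p m' := coprimeXr _ (coprime_Te cpm).
have m'_gt0 : 0 < m' by rewrite expn_gt0 Te_gt0.
rewrite Te_pfactorM // -/c -/m' Te_pfactorM // expnMn -expnM => /esym eqTe.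
have [eq_exp eq_cof] := eq_pfactorM pp (coprimeXr _ cpm) (coprimeXr _ (coprime_Te cpm')) eqTe.
have dadc_le2 : ndiv a * ndiv c <= 2.
  rewrite -(leq_exp2l _ _ m1) eq_cof expnM.
  apply: leq_trans (_ : m' ^ ndiv c <= _); last by rewrite leq_exp2r ?ndiv_gt0 ?leq_Te.
  by rewrite !leq_exp2r ?ndiv_gt0 ?leq_Te.
have [dc1 | [dc2 da1]] : ndiv c = 1 \/ ndiv c = 2 /\ ndiv a = 1.
  by have := ndiv_gt0 a_gt0; have := ndiv_gt0 c_gt0; nia.
- have /eqP := ndiv_eq1 c_gt0 dc1; rewrite muln_eq1 => /andP[/eqP sa1 /eqP km1].
  have a1 : a = 1 by have := leq_sigma a_gt0; rewrite sa1; lia.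
  rewrite dc1 expn1 /m' a1 ndiv1 expn1 in eq_cof.
  have [q [b [pq b_gt0 mE]]] : prime_power m.
    by apply: IH; rewrite // /mult_e_superperfect eq_cof.
  rewrite mE nedivisors_pfactor // in km1.
  move: eq_cof; rewrite mE (ndiv_eq1 b_gt0 km1) !(Te_pfactor, sigma1) // expn1.
  by have := prime_gt1 pq; nia.
- rewrite (sigma_ndiv2 c_gt0 dc2) (ndiv_eq1 a_gt0 da1) in eq_exp.
  have km'_gt0 := nedivisors_gt0 m'_gt0; have c1 : c = 1 by clear -eq_exp km'_gt0 c_gt0; nia.
  by move: dc2; rewrite c1 ndiv1.
Qed.

Lemma coprime_Se_pfactor p a : prime p -> 0 < a -> coprime (Se (p ^ a)) p.
Proof.
move=> pp a_gt0.
rewrite /Se primesX // primes_prime // big_seq1 pfactorK //.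
rewrite (bigD1_seq a) ?divisors_uniq ?divisors_id //= subnn expn0.
have p_dvd_rest : p %| \sum_(d <- divisors a | d != a) p ^ (a - d).
  rewrite big_seq_cond; apply: dvdn_sum => d /andP[da d_neq_a].
  rewrite -dvdn_divisors // in da.
  by apply: dvdn_exp (dvdnn p); have := dvdn_leq a_gt0 da; lia.
rewrite coprime_sym prime_coprime // addnC (dvdn_addr _ p_dvd_rest) dvdn1.
by apply: contraTneq (prime_gt1 pp) => ->.
Qed.

Theorem mainTheorem2 (n : nat) :
  1 < n -> (mult_e_perfect n \/ mult_e_superperfect n) ->
  (e_harmonic2 n <-> Se n %| de n).
Proof.
move=> n1 perfect_or_super.
have [p [a [pp a_gt0 nE]]] : prime_power n.
  by case: perfect_or_super; [exact: perfect_prime_power | exact: superperfect_prime_power].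
have cSn : coprime (Se n) n by rewrite nE coprimeXr ?coprime_Se_pfactor.
by rewrite /e_harmonic2 Gauss_dvdr.
Qed.
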